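(* Let $1\le\alpha_1\le\dots\le\alpha_r\le n$ and $p:=\gamma^{\alpha_1}\cdots\gamma^{\alpha_r}\in V$. Then for every $m\ge1$ and $i_1,\dots,i_m\in\{1,\dots,n\}$, $$\widehat{x^{i_1}}\cdots\widehat{x^{i_m}}\cdot p=\big(\widehat{x^{i_1}}\cdots\widehat{x^{i_m}}\cdot1\big)\,p .$$
   Context: Fix $n\ge1$ and an invertible complex matrix $\eta=(\eta^{ij})$ with $\eta^{ij}=\eta^{ji}$ and inverse $(\eta_{ij})$. $\mathcal{A}=W(2n|n)$ is the associative superalgebra generated by even $x^1,\dots,x^n,\partial_1,\dots,\partial_n$ and odd $\gamma^1,\dots,\gamma^n$ with relations $x^ix^j=x^jx^i$, $\partial_i\partial_j=\partial_j\partial_i$, $\partial_ix^j-x^j\partial_i=\delta_i^j$, $\gamma^i$ commuting with $x^j,\partial_j$, $\gamma^i\gamma^j+\gamma^j\gamma^i=2\eta^{ij}$. Repeated indices are summed; $x_i=\eta_{ij}x^j$, $\partial^i=\eta^{ij}\partial_j$. $\mathcal{A}$ acts on $V=\mathrm{Cl}(\eta)\otimes\mathbb{C}[x^1,\dots,x^n]$ ($x^i,\gamma^i$ by left multiplication, $\partial_i$ by $\partial/\partial x^i$). $X=\frac{\sqrt{-1}}{\sqrt2}\gamma^i\partial_i$, $H=-\frac12(\partial_ix^i+x^i\partial_i)$, $E=-\frac12\partial^i\partial_i$, $V^+=\{v\in V:Xv=0\}$. $I=\mathcal{A}X+\mathcal{A}E$, $Z_n=N_{\mathcal{A}}(I)/I$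 acting on $V^+$; $\widehat{x^i}\in Z_n$ is the class of $(H+1)x^i+\frac12\gamma^jx_j\gamma^i+\frac12x^jx_j\partial^i$. The product $(\cdot)\,p$ is right multiplication in $V$ by $p\in\mathrm{Cl}(\eta)$. *)

From HB Require Import structures.
From mathcomp Require Import all_boot all_algebra.
From mathcomp Require Import complex.
From mathcomp Require Import Rstruct.
From mathcomp Require Import mpoly.
From Stdlib Require Rdefinitions.

Set Implicit Arguments.
Unset Strict Implicit.
Unset Printing Implicit Defensive.
Import GRing.Theory.
Local Open Scope ring_scope.

Notation CC := (complex Rdefinitions.R).

(* Indices 1..n are represented by 'I_n (0-based). *)

Definition clifford_rel (n : nat) (eta : 'M[CC]_n) (B : algType CC)
    (b : 'I_n -> B) : Prop :=
  forall i j : 'I_n, b i * b j + b j * b i = (2 * eta i j)%:A.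

Definition is_clifford_algebra (n : nat) (eta : 'M[CC]_n) (C : algType CC)
    (g : 'I_n -> C) : Prop :=
  clifford_rel eta g /\
  forall (B : algType CC) (b : 'I_n -> B), clifford_rel eta b ->
    exists f : {lrmorphism C -> B},
      (forall i, f (g i) = b i) /\
      (forall f' : {lrmorphism C -> B}, (forall i, f' (g i) = b i) -> f' =1 f).

(* V = Cl(eta) (x) C[x^1,...,x^n] is realized as {mpoly C[n]} (polynomials in
   commuting variables x^i with coefficients in C; the x^i commute with C).
   x^i and gamma^i act by left multiplication, d_i by the formal partial
   derivative mderiv i, and right multiplication by p in Cl(eta) is
   v |-> v * p%:MP. *)
Section Ops.
Variables (n : nat) (eta : 'M[CC]_n) (C : algType CC) (g : 'I_n -> C).

Definition sc (a : CC) (v : {mpoly C[n]}) : {mpoly C[n]} := (a%:A : C)%:MP * v.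

Definition eta_low (i j : 'I_n) : CC := invmx eta i j.

Definition mul_xlow (j : 'I_n) (v : {mpoly C[n]}) : {mpoly C[n]} :=
  \sum_(k < n) sc (eta_low j k) ('X_k * v).

Definition d_up (i : 'I_n) (v : {mpoly C[n]}) : {mpoly C[n]} :=
  \sum_(j < n) sc (eta i j) (mderiv j v).

Definition Hop (v : {mpoly C[n]}) : {mpoly C[n]} :=
  sc (- 2^-1) (\sum_(i < n) (mderiv i ('X_i * v) + 'X_i * mderiv i v)).

Definition xhat (i : 'I_n) (v : {mpoly C[n]}) : {mpoly C[n]} :=
  Hop ('X_i * v) + 'X_i * v
  + sc (2^-1) (\sum_(j < n) (g j)%:MP * mul_xlow j ((g i)%:MP * v))
  + sc (2^-1) (\sum_(j < n) 'X_j * mul_xlow j (d_up i v)).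

(* xhat^{i_1} ... xhat^{i_m} . v  (xhat^{i_m} applied first) *)
Definition xhat_word (ws : seq 'I_n) (v : {mpoly C[n]}) : {mpoly C[n]} :=
  foldr xhat v ws.

End Ops.

(* Each of the operators [x^i], [gamma^i], [d_i] and scalars acts on
   [V = Cl(eta) (x) C[x]] from the left (left multiplications, or a derivation
   that kills the constants [Cl(eta)]), so each commutes with right
   multiplication by an element of [Cl(eta)].  Hence so does every operator
   built from them by sums and composition, in particular every word in the
   [xhat^i]; applying such a word to [1 * p] gives the result on [1] times [p]. *)
From HB Require Import structures.
From mathcomp Require Import all_boot all_algebra.
From mathcomp Require Import complex.
From mathcomp Require Import Rstruct.
From mathcomp Require Import mpoly.
Set Implicit Arguments.
Unset Strict Implicit.
Unset Printing Implicit Defensive.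
Import GRing.Theory.
Local Open Scope ring_scope.

Section CommuteRightConstant.
Variables (n : nat) (R : nzRingType).
Implicit Types (f h : {mpoly R[n]} -> {mpoly R[n]}) (u v : {mpoly R[n]}).

Definition commute_rconst f := forall v (c : R), f (v * c%:MP) = f v * c%:MP.

Lemma commute_rconst_mull u : commute_rconst ( *%R u).
Proof. by move=> v c; rewrite mulrA. Qed.

Lemma commute_rconst_mderiv i : commute_rconst (mderiv i).
Proof. by move=> v c; rewrite mderivM mderivC mulr0 addr0. Qed.

Lemma commute_rconst_comp f h :
  commute_rconst f -> commute_rconst h -> commute_rconst (fun v => f (h v)).
Proof. by move=> cf ch v c; rewrite ch cf. Qed.

Lemma commute_rconst_add f h :
  commute_rconst f -> commute_rconst h -> commute_rconst (fun v => f v + h v).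
Proof. by move=> cf ch v c; rewrite cf ch mulrDl. Qed.

Lemma commute_rconst_sum (I : Type) (r : seq I) (P : pred I)
    (F : I -> {mpoly R[n]} -> {mpoly R[n]}) :
  (forall i, commute_rconst (F i)) ->
  commute_rconst (fun v => \sum_(i <- r | P i) F i v).
Proof.
by move=> cF v c; rewrite mulr_suml; apply: eq_bigr => i _; apply: cF.
Qed.

Lemma commute_rconst_foldr (I : Type) (F : I -> {mpoly R[n]} -> {mpoly R[n]})
    (s : seq I) :
  (forall i, commute_rconst (F i)) -> commute_rconst (fun v => foldr F v s).
Proof. by move=> cF v c; elim: s => //= i s ->; apply: cF. Qed.

End CommuteRightConstant.

Section XhatCommuteRightConstant.
Variables (n : nat) (eta : 'M[CC]_n) (C : algType CC) (g : 'I_n -> C).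

Lemma commute_rconst_sc a : commute_rconst (@sc n C a).
Proof. exact: commute_rconst_mull. Qed.

Lemma commute_rconst_mul_xlow j : commute_rconst (mul_xlow (C:=C) eta j).
Proof.
apply: commute_rconst_sum => k.
exact: commute_rconst_comp (commute_rconst_sc _) (commute_rconst_mull _).
Qed.

Lemma commute_rconst_d_up i : commute_rconst (d_up (C:=C) eta i).
Proof.
apply: commute_rconst_sum => j.
exact: commute_rconst_comp (commute_rconst_sc _) (commute_rconst_mderiv _).
Qed.

Lemma commute_rconst_Hop : commute_rconst (@Hop n C).
Proof.
apply: commute_rconst_comp (commute_rconst_sc _) _.
apply: commute_rconst_sum => i; apply: commute_rconst_add.
  exact: commute_rconst_comp (commute_rconst_mderiv _) (commute_rconst_mull _).
exact: commute_rconst_comp (commute_rconst_mull _) (commute_rconst_mderiv _).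
Qed.

Lemma commute_rconst_xhat i : commute_rconst (xhat eta g i).
Proof.
rewrite /xhat; apply: commute_rconst_add; first apply: commute_rconst_add.
- apply: commute_rconst_add; last exact: commute_rconst_mull.
  exact: commute_rconst_comp commute_rconst_Hop (commute_rconst_mull _).
- apply: commute_rconst_comp (commute_rconst_sc _) _.
  apply: commute_rconst_sum => j.
  apply: commute_rconst_comp (commute_rconst_mull _) _.
  exact: commute_rconst_comp (commute_rconst_mul_xlow _) (commute_rconst_mull _).
- apply: commute_rconst_comp (commute_rconst_sc _) _.
  apply: commute_rconst_sum => j.
  apply: commute_rconst_comp (commute_rconst_mull _) _.
  exact: commute_rconst_comp (commute_rconst_mul_xlow _) (commute_rconst_d_up _).
Qed.

Lemma commute_rconst_xhat_word ws : commute_rconst (xhat_word eta g ws).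
Proof. exact: commute_rconst_foldr commute_rconst_xhat. Qed.

End XhatCommuteRightConstant.

Theorem corollary6p2 (n : nat) (eta : 'M[CC]_n)
    (C : algType CC) (g : 'I_n -> C) (alpha : seq 'I_n) (ws : seq 'I_n) :
  (1 <= n)%N ->
  eta^T = eta ->
  eta \in unitmx ->
  is_clifford_algebra eta g ->
  sorted (fun a b : 'I_n => (a <= b)%N) alpha ->
  (1 <= size ws)%N ->
  let p : C := \prod_(a <- alpha) g a in
  xhat_word eta g ws p%:MP = xhat_word eta g ws 1 * p%:MP.
Proof.
move=> _ _ _ _ _ _ p.
by rewrite -(commute_rconst_xhat_word eta g ws 1 p) mul1r.
Qed.
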